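(* Let $(A,\cdot,\circ)$ be a skew brace and $B$, $C$ sub-skew braces with $A = B\cdot C$. If $B$ is a trivial skew brace, then $B*C$ is a normal subgroup of $(A,\cdot)$.
   Context: A skew brace is a set $A$ with two group operations $\cdot$ (often written by juxtaposition) and $\circ$ such that $a\circ(bc) = (a\circ b)\,a^{-1}\,(a\circ c)$ for all $a,b,c\in A$. $a^{-1}$ denotes the inverse in $(A,\cdot)$. Define $a*b = a^{-1}(a\circ b)b^{-1}$; $B*C$ is the subgroup of $(A,\cdot)$ generated by all $b*c$, $b\in B$, $c\in C$. A sub-skew brace is a subset that is a subgroup of both groups; it is trivial if $a\circ b=ab$ for all its elements $a,b$. $A=B\cdot C$ means every element of $A$ is $bc$ with $b\in B$, $c\in C$. *)

Set Implicit Arguments.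

Record group_on (A : Type) := GroupOn {
  gmul : A -> A -> A;
  ginv : A -> A;
  gone : A;
  gmulA : forall a b c, gmul a (gmul b c) = gmul (gmul a b) c;
  gmul1l : forall a, gmul gone a = a;
  gmul1r : forall a, gmul a gone = a;
  gmulVl : forall a, gmul (ginv a) a = gone;
  gmulVr : forall a, gmul a (ginv a) = gone
}.

Record skew_brace (A : Type) := SkewBrace {
  dotg : group_on A;
  circg : group_on A;
  brace_comp : forall a b c,
    gmul circg a (gmul dotg b c) =
    gmul dotg (gmul dotg (gmul circg a b) (ginv dotg a)) (gmul circg a c)
}.

Section SkewBraceDefs.
Variables (A : Type) (S : skew_brace A).

Definition dmul := gmul (dotg S).
Definition dinv := ginv (dotg S).
Definition done_ := gone (dotg S).
Definition cmul := gmul (circg S).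

Definition star (a b : A) : A := dmul (dmul (dinv a) (cmul a b)) (dinv b).

Definition is_subgroup (G : group_on A) (H : A -> Prop) : Prop :=
  H (gone G) /\ (forall x y, H x -> H y -> H (gmul G x y)) /\
  (forall x, H x -> H (ginv G x)).

Definition sub_skew_brace (B : A -> Prop) : Prop :=
  is_subgroup (dotg S) B /\ is_subgroup (circg S) B.

Definition trivial_sub (B : A -> Prop) : Prop :=
  forall a b, B a -> B b -> cmul a b = dmul a b.

Definition gen_dot (X : A -> Prop) : A -> Prop :=
  fun x => forall H, is_subgroup (dotg S) H -> (forall y, X y -> H y) -> H x.

Definition star_set (B C : A -> Prop) : A -> Prop :=
  gen_dot (fun x => exists b c, B b /\ C c /\ x = star b c).

Definition dot_product_full (B C : A -> Prop) : Prop :=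
  forall a, exists b c, B b /\ C c /\ a = dmul b c.

Definition normal_dot (N : A -> Prop) : Prop :=
  is_subgroup (dotg S) N /\
  forall a n, N n -> N (dmul (dmul a n) (dinv a)).

End SkewBraceDefs.

Set Implicit Arguments.

(* Write [N] for the subgroup of (A,.) generated by the elements
   [b * c] (b in B, c in C) and [x^y] for the conjugate [y x y^{-1}].
   1. The star operation satisfies the "derivation" rule
        a * (x y) = (a * x) x (a * y) x^{-1}
      in every skew brace; if B is trivial then [b * b' = 1] on B.
   2. A generated subgroup is stable under conjugation by [a] as soon as the
      conjugates of its generators lie in it.
   3. Conjugating a generator [b * c'] by [c] in C gives
      [(b * c)^{-1} (b * (c c'))], an element of N (rule 1).
   4. Conjugating a generator [b'' * c] by [b] in B: writing the inverse of
      [b c] as [b1 c1], rule 1 and triviality of B turn both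
      [b'' * (b c)] and [b'' * (c1^{-1} b1^{-1})] into the single generator
      [b'' * c1^{-1}], which is thus that conjugate.
   Since every [a] is some [b c] and conjugation by [b c] is conjugation by
   [c] followed by conjugation by [b], N is normal. *)

Section GroupFacts.
Variables (A : Type) (G : group_on A).
Local Notation "x * y" := (gmul G x y).
Local Notation "x ^-1" := (ginv G x) (at level 3).
Local Notation "1" := (gone G).

Lemma mulKl x y : x^-1 * (x * y) = y.
Proof. rewrite gmulA, gmulVl, gmul1l; reflexivity. Qed.

Lemma mulKVr x y : (y * x) * x^-1 = y.
Proof. rewrite <- gmulA, gmulVr, gmul1r; reflexivity. Qed.

Lemma mulVKr x y : (y * x^-1) * x = y.
Proof. rewrite <- gmulA, gmulVl, gmul1r; reflexivity. Qed.

Lemma inv_uniq x y : x * y = 1 -> y = x^-1.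
Proof. intro H. rewrite <- (mulKl x y), H, gmul1r; reflexivity. Qed.

Lemma inv_mul x y : (x * y)^-1 = y^-1 * x^-1.
Proof.
  symmetry; apply inv_uniq.
  rewrite <- gmulA, (gmulA G y), gmulVr, gmul1l, gmulVr; reflexivity.
Qed.

Lemma inv_inv x : (x^-1)^-1 = x.
Proof. symmetry; apply inv_uniq, gmulVl. Qed.

Definition conj_by (a x : A) : A := (a * x) * a^-1.

Lemma conj_by_mul a b x : conj_by (a * b) x = conj_by a (conj_by b x).
Proof. unfold conj_by; rewrite inv_mul, !gmulA; reflexivity. Qed.

Lemma conj_by1 a : conj_by a 1 = 1.
Proof. unfold conj_by; rewrite gmul1r, gmulVr; reflexivity. Qed.

Lemma conj_by_mulr a x y : conj_by a (x * y) = conj_by a x * conj_by a y.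
Proof. unfold conj_by; rewrite !gmulA, mulVKr; reflexivity. Qed.

Lemma conj_by_inv a x : conj_by a x^-1 = (conj_by a x)^-1.
Proof. unfold conj_by; rewrite !inv_mul, inv_inv, gmulA; reflexivity. Qed.

End GroupFacts.

Section GeneratedSubgroup.
Variables (A : Type) (S : skew_brace A) (X : A -> Prop).
Local Notation conj := (conj_by (dotg S)).

Lemma gen_dot_subgroup : is_subgroup (dotg S) (gen_dot S X).
Proof.
  split; [|split].
  - intros H [H1 _] _; exact H1.
  - intros x y hx hy H hH hX. pose proof hH as [_ [Hmul _]].
    apply Hmul; [apply hx | apply hy]; auto.
  - intros x hx H hH hX. pose proof hH as [_ [_ Hinv]].
    apply Hinv, hx; auto.
Qed.

Lemma gen_dot_in x : X x -> gen_dot S X x.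
Proof. intros hx H _ hX; auto. Qed.

(* To check that [conj a] preserves the generated subgroup it suffices to
   check it on the generators: the preimage of the subgroup under the
   endomorphism [conj a] is a subgroup containing [X]. *)
Lemma gen_dot_conj a :
  (forall g, X g -> gen_dot S X (conj a g)) ->
  forall n, gen_dot S X n -> gen_dot S X (conj a n).
Proof.
  intros hgen n hn.
  destruct gen_dot_subgroup as [N1 [Nmul Ninv]].
  apply (hn (fun x => gen_dot S X (conj a x))); [split; [|split] | exact hgen].
  - rewrite conj_by1; exact N1.
  - intros x y hx hy; rewrite conj_by_mulr; auto.
  - intros x hx; rewrite conj_by_inv; auto.
Qed.

End GeneratedSubgroup.

Section StarOperation.
Variables (A : Type) (S : skew_brace A).
Local Notation "x * y" := (gmul (dotg S) x y).
Local Notation "x ^-1" := (ginv (dotg S) x) (at level 3).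
Local Notation "1" := (gone (dotg S)).
Local Notation conj := (conj_by (dotg S)).

Lemma star_mulr a x y : star S a (x * y) = star S a x * x * star S a y * x^-1.
Proof.
  unfold star, dmul, dinv, cmul.
  rewrite (brace_comp S), inv_mul, !gmulA, (mulVKr (dotg S) x); reflexivity.
Qed.

Lemma star_trivial {B : A -> Prop} {b b' : A} :
  trivial_sub S B -> B b -> B b' -> star S b b' = 1.
Proof.
  intros hT hb hb'. unfold star, dmul, dinv, cmul.
  unfold trivial_sub, cmul, dmul in hT.
  rewrite hT by assumption. rewrite mulKl, gmulVr; reflexivity.
Qed.

Definition star_gens (B C : A -> Prop) (x : A) : Prop :=
  exists b c, B b /\ C c /\ x = star S b c.

Variables (B C : A -> Prop).
Hypothesis C_mul : forall x y, C x -> C y -> C (x * y).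

Lemma conj_C_star_gen c g :
  C c -> star_gens B C g -> star_set S B C (conj c g).
Proof.
  intros hc [b [c' [hb [hc' ->]]]].
  destruct (gen_dot_subgroup S (star_gens B C)) as [_ [Nmul Ninv]].
  replace (conj c (star S b c'))
    with ((star S b c)^-1 * star S b (c * c')).
  - apply Nmul; [apply Ninv|]; apply gen_dot_in; exists b; eauto.
  - rewrite star_mulr, !gmulA, gmulVl, gmul1l; reflexivity.
Qed.

Hypothesis B_inv : forall x, B x -> B x^-1.
Hypothesis B_trivial : trivial_sub S B.
Hypothesis C_inv : forall x, C x -> C x^-1.
Hypothesis A_eq_BC : dot_product_full S B C.

(* Conjugation by [b] in B: with [(b c)^{-1} = b1 c1] we get
   [b (b'' * c) b^{-1} = b'' * (b c) = b'' * (c1^{-1} b1^{-1}) = b'' * c1^{-1}]. *)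
Lemma conj_B_star_gen b g :
  B b -> star_gens B C g -> star_set S B C (conj b g).
Proof.
  intros hb [b'' [c [hb'' [_ ->]]]].
  destruct (A_eq_BC (b * c)^-1) as [b1 [c1 [hb1 [hc1 E]]]].
  assert (Ebc : b * c = c1^-1 * b1^-1).
  { rewrite <- inv_mul. unfold dmul in E. rewrite <- E, inv_inv; reflexivity. }
  assert (Econj : star S b'' (b * c) = conj b (star S b'' c)).
  { rewrite star_mulr, (star_trivial B_trivial hb'' hb), gmul1l; reflexivity. }
  rewrite <- Econj, Ebc, star_mulr, (star_trivial B_trivial hb'' (B_inv hb1)).
  rewrite gmul1r, mulKVr.
  apply gen_dot_in. exists b'', c1^-1; auto.
Qed.

End StarOperation.

Theorem proposition3p1 (A : Type) (S : skew_brace A) (B C : A -> Prop) :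
  sub_skew_brace S B -> sub_skew_brace S C ->
  dot_product_full S B C ->
  trivial_sub S B ->
  normal_dot S (star_set S B C).
Proof.
  intros [[_ [_ B_inv]] _] [[_ [C_mul C_inv]] _] A_eq_BC B_trivial.
  split; [apply gen_dot_subgroup|].
  intros a n hn. destruct (A_eq_BC a) as [b [c [hb [hc ->]]]].
  change (star_set S B C (conj_by (dotg S) (gmul (dotg S) b c) n)).
  rewrite conj_by_mul.
  apply gen_dot_conj; [intros g hg; apply conj_B_star_gen; auto|].
  apply gen_dot_conj; [intros g hg; apply conj_C_star_gen; auto|exact hn].
Qed.
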